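(* Let $n<m$ and let $s\in\mathcal K$ have a principal $m$-block. Let $s'=sh^{\,2r_m(s)-(q_m-1)+A_m-A_n}(\mathrm{rev}(s))$. Then at least a proportion $\prod_{i=n}^{m-1}\big(1-\frac{2}{l_i-1}\big)$ of the $n$-blocks contained in the principal $m$-block of $s$ are lined up with $n$-blocks of $s'$ (i.e. occupy exactly the same interval as an occurrence of a reversed $n$-word in $s'$).
   Context: Circular coefficients $\langle k_n,l_n\rangle$ ($k_n\ge2$, $l_n\ge2$ increasing, $\sum1/l_n<\infty$), $p_0=0,q_0=1$, $q_{n+1}=k_nl_nq_n^2$, $p_{n+1}=p_nq_nk_nl_n+1$; $\mathcal C_n(w_0,\dots,w_{k_n-1})=\prod_{i=0}^{q_n-1}\prod_{j=0}^{k_n-1}(b^{q_n-j_i}w_j^{l_n-1}e^{j_i})$, $j_i\in[0,q_n)$, $j_i\equiv p_n^{-1}i\pmod{q_n}$. The circle system $\mathcal K\subseteq\{*,b,e\}^{\mathbb Z}$ has words $w_0=*$, $w_{n+1}=\mathcal C_n(w_n,\dots,w_n)$ and consists of sequences all of whose finite subwords occur in some $w_n$. $sh(x)(i)=x(i+1)$, $\mathrm{rev}(x)(k)=x(-k)$. If $s\restriction[-k,q_n-k)=w_n$ with $0\le k<q_n$ (unique by unique readability) this interval is the principal $n$-block of $s$ and $r_n(s)=k$; $n$-blocks of $s$ are the intervals where $s$ has an occurrence of $w_n$ within its parsing. $A_0=0$, $A_{n+1}=A_n-(p_n)^{-1}$, where $(p_n)^{-1}\in[0,q_n)$ is the inverse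 of $p_n$ mod $q_n$ ($(p_0)^{-1}=0$). *)

From HB Require Import structures.
From mathcomp Require Import all_boot all_order all_algebra.
Set Implicit Arguments. Unset Strict Implicit. Unset Printing Implicit Defensive.
Import Order.TTheory GRing.Theory Num.Theory.

Inductive sym := Star | Bsym | Esym.
Definition sym_eq_dec : forall x y : sym, {x = y} + {x <> y}.
Proof. decide equality. Defined.
HB.instance Definition _ := hasDecEq.Build sym (compareP sym_eq_dec).

Section Circular.
Variables k l : nat -> nat.

Fixpoint q (n : nat) : nat :=
  if n is n'.+1 then k n' * l n' * (q n') ^ 2 else 1.

Fixpoint p (n : nat) : nat :=
  if n is n'.+1 then p n' * q n' * k n' * l n' + 1 else 0.

(* (p_n)^{-1} : the inverse of p_n modulo q_n, taken in [0, q_n)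
   (the least x < q_n with p_n * x = 1 mod q_n; gives 0 when q_n = 1). *)
Definition pinv (n : nat) : nat :=
  nth 0 [seq x <- iota 0 (q n) | p n * x == 1 %[mod q n]] 0.

Definition jj (n i : nat) : nat := (pinv n * i) %% q n.

(* The circular operator C_n(w_0, ..., w_{k_n - 1}) =
   prod_{i < q_n} prod_{j < k_n} b^{q_n - j_i} w_j^{l_n - 1} e^{j_i}. *)
Definition Cop (n : nat) (ws : nat -> seq sym) : seq sym :=
  flatten [seq flatten [seq nseq (q n - jj n i) Bsym
                              ++ flatten (nseq (l n - 1) (ws j))
                              ++ nseq (jj n i) Esym
                        | j <- iota 0 (k n)]
          | i <- iota 0 (q n)].

Fixpoint w (n : nat) : seq sym :=
  if n is n'.+1 then Cop n' (fun _ => w n') else [:: Star].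

Fixpoint A (n : nat) : int :=
  if n is n'.+1 then (A n' - (pinv n')%:Z)%R else 0%R.

Definition window (s : int -> sym) (a : int) (len : nat) : seq sym :=
  mkseq (fun i => s (a + i%:Z)%R) len.

Definition inK (s : int -> sym) : Prop :=
  forall (a : int) (len : nat), exists n, infix (window s a len) (w n).

End Circular.

Definition sh (x : int -> sym) : int -> sym := fun i => x (i + 1)%R.
Definition shpow (t : int) (x : int -> sym) : int -> sym := fun i => x (i + t)%R.

Definition revs (x : int -> sym) : int -> sym := fun i => x (- i)%R.

(* [-r, q_n - r) is the principal n-block of s, i.e. r = r_n(s) *)
Definition principal_block (k l : nat -> nat) (s : int -> sym) (n r : nat) : Prop :=
  (r < q k l n)%N /\ window s (- r%:Z)%R (q k l n) = w k l n.

From HB Require Import structures.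
From mathcomp Require Import all_boot all_order all_algebra.
From mathcomp Require Import zify ring.
Set Implicit Arguments. Unset Strict Implicit. Unset Printing Implicit Defensive.
Import Order.TTheory GRing.Theory Num.Theory.

(* Reading [s'] backwards reflects the principal m-block of [s]: the position [d]
   of the block is sent to [axis - d], where [axis = q_m - q_n + sum_(n <= i < m) p_i^-1].
   So it suffices to show that for the stated proportion of the occurrences [d] of
   [w_n] in [w_m], [axis - d] is an occurrence as well.

   Every [w_i] contains [*], and the runs of [b]'s and [e]'s around the copies of
   [w_i] in [w_(i+1)] are longer than any star-free factor of [w_n]; hence every
   occurrence of [w_n] in [w_(i+1)] lies inside a single copy of [w_i] (unique
   readability) and occurrences can be counted copy by copy.  The reflection of
   level [i+1] sends row [a], block [j] of [w_(i+1)] to row [q_i - 1 - a], block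
   [k_i - 1 - j]; as [j_a + p_i^-1 + j_(q_i - 1 - a)] is a multiple of [q_i], it maps
   the run [w_i^(l_i - 1)] of that block onto the mirror run shifted by [0], [q_i] or
   [2 q_i].  At most two of the [l_i - 1] copies are lost, which gives the factor
   [1 - 2/(l_i - 1)] per level; at level [n] the same count is made with the
   rotations of [w_n] onto itself.  When [l_n = 2] this factor is negative and the
   bound is trivial. *)

Section Occurrences.
Variable T : eqType.
Implicit Types (u X U V : seq T) (f : nat -> seq T).

Definition occurs_at u X d : bool :=
  (d + size u <= size X) && (take (size u) (drop d X) == u).

Lemma occurs_atP (c : T) u X d :
  reflect (d + size u <= size X /\
           forall t, t < size u -> nth c X (d + t) = nth c u t)
          (occurs_at u X d).
Proof.
have size_window : d + size u <= size X -> size (take (size u) (drop d X)) = size u.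
  by move=> h; rewrite size_takel // size_drop; lia.
apply: (iffP andP) => -[hsz h]; split => //.
  by move=> t ht; rewrite -(eqP h) nth_take // nth_drop.
apply/eqP/(@eq_from_nth _ c); rewrite size_window // => t ht.
by rewrite nth_take // nth_drop h.
Qed.

Lemma occurs_at_size u X d : occurs_at u X d -> d + size u <= size X.
Proof. by case/andP. Qed.

Lemma occurs_at_out u X d : size X < d + size u -> occurs_at u X d = false.
Proof. by move=> h; apply/negP => /occurs_at_size; lia. Qed.

Lemma occurs_at_catl u U V d :
  d + size u <= size U -> occurs_at u (U ++ V) d = occurs_at u U d.
Proof.
case: u => [|c u'] h; first by rewrite /occurs_at size_cat !take0 eqxx !andbT; lia.
apply/(occurs_atP c)/(occurs_atP c) => -[h1 h2]; split; rewrite ?size_cat //; try lia.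
  by move=> t ht; rewrite -h2 // nth_cat ifT //; lia.
by move=> t ht; rewrite nth_cat ifT ?h2 //; lia.
Qed.

Lemma occurs_at_catr u U V t : occurs_at u (U ++ V) (size U + t) = occurs_at u V t.
Proof.
rewrite /occurs_at size_cat drop_cat ifF; last lia.
by rewrite addKn; congr (_ && _); lia.
Qed.

Lemma flatten_iotaS f K :
  flatten [seq f i | i <- iota 0 K.+1] = f 0 ++ flatten [seq f i.+1 | i <- iota 0 K].
Proof. by rewrite /= -[1]/(1 + 0) iotaDl -map_comp. Qed.

Lemma size_flatten_uniform f K N : (forall i, i < K -> size (f i) = N) ->
  size (flatten [seq f i | i <- iota 0 K]) = K * N.
Proof.
elim: K f => [|K IH] f h //.
by rewrite flatten_iotaS size_cat h // IH ?mulSn // => i hi; apply: h.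
Qed.

Lemma occurs_at_flatten_intro u f K N s x :
  (forall i, i < K -> size (f i) = N) -> s < K -> occurs_at u (f s) x ->
  occurs_at u (flatten [seq f i | i <- iota 0 K]) (s * N + x).
Proof.
elim: K f s => [|K IH] f s h hs ho //.
rewrite flatten_iotaS; case: s hs ho => [|s] hs ho.
  by rewrite occurs_at_catl //; have := occurs_at_size ho; rewrite h.
rewrite mulSn -addnA -{1}(h 0 isT) occurs_at_catr.
by apply: (IH (fun i => f i.+1)) => // i hi; apply: h.
Qed.

End Occurrences.

Section Gaps.
Variables (T : eqType) (c : T).
Implicit Types (u X U V : seq T) (f : nat -> seq T).

Definition head_gap X := index c X.
Definition tail_gap X := index c (rev X).
Definition gaps_le X R := forall i len, i + len <= size X ->
  (forall t, t < len -> nth c X (i + t) != c) -> len <= R.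

Lemma before_head_gap X p : p < head_gap X -> nth c X p != c.
Proof. by move=> /(before_find c); rewrite /= => ->. Qed.

Lemma head_gap_le X p : nth c X p = c -> head_gap X <= p.
Proof. by move=> h; rewrite leqNgt; apply/negP => /before_head_gap; rewrite h eqxx. Qed.

Lemma tail_gap_size X : tail_gap X <= size X.
Proof. by rewrite /tail_gap -size_rev index_size. Qed.

Lemma after_tail_gap X p : size X - tail_gap X <= p -> p < size X -> nth c X p != c.
Proof.
move=> h1 h2; have h3 : size X - p.+1 < tail_gap X by lia.
have := before_find c h3; rewrite nth_rev; last by lia.
have -> : size X - (size X - p.+1).+1 = p by lia.
by move/negbT.
Qed.

Lemma tail_gap_lt X p : p < size X -> nth c X p = c -> p + tail_gap X < size X.
Proof.
move=> h1 h2; rewrite -subn_gt0 ltnNge; apply/negP => h.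
by have := @after_tail_gap X p; rewrite h2 eqxx => H; have : false by apply: H; lia.
Qed.

Lemma tail_gap_lt_size X : c \in X -> tail_gap X < size X.
Proof. by rewrite /tail_gap -(size_rev X) index_mem mem_rev. Qed.

Lemma nth_tail_gap X : c \in X -> nth c X (size X - (tail_gap X).+1) = c.
Proof.
move=> h; have h1 := tail_gap_lt_size h.
by rewrite -nth_rev ?nth_index ?mem_rev //; lia.
Qed.

Lemma head_gap_cat U V : c \in U -> head_gap (U ++ V) = head_gap U.
Proof. by move=> h; rewrite /head_gap index_cat h. Qed.

Lemma tail_gap_cat U V : c \in V -> tail_gap (U ++ V) = tail_gap V.
Proof. by move=> h; rewrite /tail_gap rev_cat index_cat mem_rev h. Qed.

Lemma head_gap_free X : c \notin X -> head_gap X = size X.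
Proof. exact: memNindex. Qed.

Lemma tail_gap_free X : c \notin X -> tail_gap X = size X.
Proof. by move=> h; rewrite /tail_gap memNindex ?mem_rev // size_rev. Qed.

Lemma nseq_free a x : x != c -> c \notin nseq a x.
Proof. by move=> hx; rewrite mem_nseq eq_sym (negbTE hx) andbF. Qed.

Lemma head_gap_nseq_cat a x V : x != c -> head_gap (nseq a x ++ V) = a + head_gap V.
Proof. by move=> hx; rewrite /head_gap index_cat (negbTE (nseq_free a hx)) size_nseq. Qed.

Lemma tail_gap_cat_nseq a x U : x != c -> tail_gap (U ++ nseq a x) = a + tail_gap U.
Proof.
move=> hx; rewrite /tail_gap rev_cat index_cat mem_rev (negbTE (nseq_free a hx)).
by rewrite size_rev size_nseq.
Qed.

Lemma gaps_le_mono X R R' : R <= R' -> gaps_le X R -> gaps_le X R'.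
Proof. by move=> h1 h2 i len h3 h4; exact: (leq_trans (h2 i len h3 h4) h1). Qed.

Lemma gaps_le_tail X R : gaps_le X R -> tail_gap X <= R.
Proof.
move=> h; apply: (h (size X - tail_gap X)); first by have := tail_gap_size X; lia.
move=> t ht; apply: after_tail_gap; have := tail_gap_size X; lia.
Qed.

Lemma gaps_le_nseq a x R : x != c -> a <= R -> gaps_le (nseq a x) R.
Proof. by move=> hx ha i len; rewrite size_nseq => h _; lia. Qed.

Lemma gaps_le_nil R : gaps_le [::] R.
Proof. by move=> i len /= h _; lia. Qed.

Lemma gaps_le_cat U V R :
  gaps_le U R -> gaps_le V R -> tail_gap U + head_gap V <= R -> gaps_le (U ++ V) R.
Proof.
move=> hU hV hUV i len; rewrite size_cat => hsz hr.
case: (leqP (i + len) (size U)) => h1.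
  apply: (hU i) => // t ht; have := hr t ht; rewrite nth_cat; case: ifP => //; lia.
case: (leqP (size U) i) => h2.
  apply: (hV (i - size U)); first lia.
  move=> t ht; have := hr t ht; rewrite nth_cat ifF; last lia.
  by have -> : i + t - size U = i - size U + t by lia.
have hA : size U - tail_gap U <= i.
  have [hs|hs] := boolP (c \in U); last by rewrite tail_gap_free //; lia.
  rewrite leqNgt; apply/negP => h3; have h4 := tail_gap_lt_size hs.
  have := hr (size U - (tail_gap U).+1 - i); rewrite nth_cat.
  have -> : i + (size U - (tail_gap U).+1 - i) = size U - (tail_gap U).+1 by lia.
  by rewrite ifT ?nth_tail_gap ?eqxx //; [move/(_ _)/negP; apply; lia | lia].
have hB : i + len <= size U + head_gap V.
  have [hs|hs] := boolP (c \in V); last by rewrite head_gap_free //; lia.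
  rewrite leqNgt; apply/negP => h3.
  have := hr (size U + head_gap V - i); rewrite nth_cat.
  have -> : i + (size U + head_gap V - i) = size U + head_gap V by lia.
  rewrite ifF; last by lia.
  rewrite addKn nth_index // eqxx => /(_ _)/negP; apply; lia.
lia.
Qed.

(* Unique readability: an occurrence straddling the junction would contain the
   [c]-free factor of length [tail_gap U + head_gap V] around it. *)
Lemma occurs_at_cat_split u U V R d :
  c \in u -> gaps_le u R -> R < tail_gap U + head_gap V ->
  head_gap u <= head_gap V -> tail_gap u <= tail_gap U ->
  occurs_at u (U ++ V) d -> (d + size u <= size U) \/ (size U <= d).
Proof.
move=> hu hR hRl hb he /(occurs_atP c) [hsz hn]; rewrite size_cat in hsz.
have hb0 : head_gap u < size u by rewrite index_mem.
have hstar : nth c (U ++ V) (d + head_gap u) = c by rewrite hn // nth_index.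
rewrite nth_cat in hstar.
case: (ltnP (d + head_gap u) (size U)) => h1; rewrite ?h1 in hstar; last first.
  by rewrite ltnNge h1 /= in hstar; have := head_gap_le hstar; lia.
have hU := tail_gap_lt h1 hstar.
have he0 := tail_gap_lt_size hu; have hs1 := nth_tail_gap hu.
set p2 := d + (size u - (tail_gap u).+1).
have hstar2 : nth c (U ++ V) p2 = c by rewrite /p2 hn //; lia.
rewrite nth_cat in hstar2.
case: (ltnP p2 (size U)) => h2; rewrite ?h2 in hstar2.
  by have := tail_gap_lt h2 hstar2; rewrite /p2; lia.
rewrite ltnNge h2 /= in hstar2; have hbv := head_gap_le hstar2.
exfalso; have : tail_gap U + head_gap V <= R; last by lia.
apply: (hR (size U - tail_gap U - d)); first by rewrite /p2 in hbv; lia.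
move=> t ht; rewrite -hn; last by rewrite /p2 in hbv; lia.
rewrite nth_cat; case: ifP => h3; first by apply: after_tail_gap; lia.
by apply: before_head_gap; lia.
Qed.

Lemma occurs_at_nseq_cat u a x V d : x != c -> c \in u -> head_gap u <= head_gap V ->
  occurs_at u (nseq a x ++ V) d = (a <= d) && occurs_at u V (d - a).
Proof.
move=> hx hu hb; case: (leqP a d) => h /=.
  have -> : d = size (nseq a x) + (d - a) by rewrite size_nseq; lia.
  by rewrite occurs_at_catr size_nseq addKn.
apply/negP => /(occurs_atP c) [hsz hn].
have : nth c (nseq a x ++ V) (d + head_gap u) = c by rewrite hn ?nth_index ?index_mem.
rewrite nth_cat size_nseq; case: ifP => h2.
  by rewrite nth_nseq h2 => hh; rewrite hh eqxx in hx.
by move/head_gap_le; lia.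
Qed.

Lemma occurs_at_cat_nseq u a x U d : x != c -> c \in u -> tail_gap u <= tail_gap U ->
  occurs_at u (U ++ nseq a x) d = occurs_at u U d.
Proof.
move=> hx hu he; case: (leqP (d + size u) (size U)) => h; first exact: occurs_at_catl.
rewrite (occurs_at_out (X := U)) //; apply/negP => /(occurs_atP c) [hsz hn].
have hl := tail_gap_lt_size hu.
have : nth c (U ++ nseq a x) (d + (size u - (tail_gap u).+1)) = c.
  by rewrite hn ?nth_tail_gap //; lia.
rewrite nth_cat; case: ifP => h2; first by move/(tail_gap_lt h2); lia.
rewrite nth_nseq; case: ifP => h3 hh; first by rewrite hh eqxx in hx.
by rewrite size_cat size_nseq in hsz; lia.
Qed.

Lemma mem_flatten_iota f K : 0 < K -> c \in f 0 -> c \in flatten [seq f i | i <- iota 0 K].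
Proof. by case: K => // K _ h; rewrite flatten_iotaS mem_cat h. Qed.

Lemma head_gap_flatten f K : 0 < K -> c \in f 0 ->
  head_gap (flatten [seq f i | i <- iota 0 K]) = head_gap (f 0).
Proof. by case: K => // K _ h; rewrite flatten_iotaS head_gap_cat. Qed.

Lemma tail_gap_flatten f K : 0 < K -> (forall i, i < K -> c \in f i) ->
  tail_gap (flatten [seq f i | i <- iota 0 K]) = tail_gap (f K.-1).
Proof.
elim: K f => // K IH f _ h; rewrite flatten_iotaS.
case: K IH h => [|K] IH h; first by rewrite /= cats0.
rewrite tail_gap_cat; last by apply: mem_flatten_iota => //; apply: h.
by rewrite (IH (fun i => f i.+1)) // => i hi; apply: h.
Qed.

Lemma gaps_le_flatten f K R :
  (forall i, i < K -> gaps_le (f i) R /\ c \in f i) ->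
  (forall i, i.+1 < K -> tail_gap (f i) + head_gap (f i.+1) <= R) ->
  gaps_le (flatten [seq f i | i <- iota 0 K]) R.
Proof.
elim: K f => [|K IH] f h1 h2; first exact: gaps_le_nil.
rewrite flatten_iotaS; apply: gaps_le_cat.
- by case: (h1 0 isT).
- by apply: IH => [i hi|i hi]; [apply: h1 | apply: h2]; lia.
case: K IH h1 h2 => [|K] IH h1 h2.
  by rewrite /= addn0; apply: gaps_le_tail; case: (h1 0 isT).
by rewrite flatten_iotaS head_gap_cat; [exact: h2 | case: (h1 1 isT)].
Qed.

Lemma occurs_at_flatten u f K N R s x :
  c \in u -> gaps_le u R ->
  (forall i, i < K -> [/\ size (f i) = N, c \in f i,
     head_gap u <= head_gap (f i) & tail_gap u <= tail_gap (f i)]) ->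
  (forall i j, i < K -> j < K -> R < tail_gap (f i) + head_gap (f j)) ->
  s < K -> x < N ->
  occurs_at u (flatten [seq f i | i <- iota 0 K]) (s * N + x) = occurs_at u (f s) x.
Proof.
move=> hu hR; elim: K f s => [|K IH] f s h hj hs hx //.
rewrite flatten_iotaS; case: s hs => [|s] hs; last first.
  have [h0 _ _ _] := h 0 isT.
  rewrite mulSn -addnA -{1}h0 occurs_at_catr.
  apply: (IH (fun i => f i.+1)) => // [i hi|i j hi hj']; [exact: h | exact: hj].
have [h0 _ _ he0] := h 0 isT; rewrite mul0n add0n.
case: K IH h hj hs => [|K] IH h hj hs; first by rewrite /= cats0.
apply/idP/idP => ho; last by rewrite occurs_at_catl // (occurs_at_size ho).
have [_ hc1 hb1 _] := h 1 isT.
have := occurs_at_cat_split hu hR _ _ _ ho.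
rewrite flatten_iotaS head_gap_cat // h0 => /(_ (hj 0 1 isT isT) hb1 he0) [hin|]; last lia.
by move: ho; rewrite -flatten_iotaS occurs_at_catl // h0.
Qed.

Lemma nth_flatten_const u L p : p < L * size u ->
  nth c (flatten [seq u | _ <- iota 0 L]) p = nth c u (p %% size u).
Proof.
elim: L p => [|L IH] p hp; first by rewrite mul0n in hp.
rewrite flatten_iotaS nth_cat; case: ifP => h; first by rewrite modn_small.
rewrite IH; last by rewrite mulSn in hp; lia.
have hle : size u <= p by rewrite leqNgt h.
by congr nth; rewrite -[in RHS](subnK hle) modnDr.
Qed.

End Gaps.

Section CountIota.
Implicit Type P : pred nat.

Lemma sub_in_count (T : eqType) (a1 a2 : pred T) (s : seq T) :
  {in s, forall x, a1 x -> a2 x} -> count a1 s <= count a2 s.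
Proof.
move=> h; rewrite -!size_filter; apply: size_subseq.
rewrite subseq_filter filter_subseq andbT.
by apply/allP => x; rewrite mem_filter => /andP [hx xs]; exact: h.
Qed.

Lemma count_iota_shift P a n :
  count P (iota a n) = count (fun x => P (a + x)) (iota 0 n).
Proof. by rewrite -[a]addn0 iotaDl count_map; apply: eq_count => x; rewrite /= addn0. Qed.

Lemma count_iotaD P n1 n2 :
  count P (iota 0 (n1 + n2)) = count P (iota 0 n1) + count (fun x => P (n1 + x)) (iota 0 n2).
Proof. by rewrite iotaD count_cat (count_iota_shift P n1). Qed.

Lemma count_iota_le P n M : n <= M -> count P (iota 0 n) <= count P (iota 0 M).
Proof. by move=> h; rewrite -(subnKC h) count_iotaD leq_addr. Qed.

Lemma count_iota_trunc P n M : n <= M ->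
  (forall x, n <= x -> x < M -> P x = false) -> count P (iota 0 M) = count P (iota 0 n).
Proof.
move=> h1 h2; rewrite -(subnKC h1) count_iotaD -[RHS]addn0; congr (_ + _).
rewrite (eq_in_count (a2 := pred0)) ?count_pred0 // => x.
by rewrite mem_iota => /andP [_ hx] /=; apply: h2; lia.
Qed.

Lemma count_iota_mul P K N c :
  (forall s, s < K -> count (fun x => P (s * N + x)) (iota 0 N) = c) ->
  count P (iota 0 (K * N)) = K * c.
Proof.
elim: K => [|K IH] h //; rewrite ssrnat.mulSnr count_iotaD IH => [|s hs]; last by apply: h; lia.
by rewrite h // ssrnat.mulSnr.
Qed.

Lemma count_iota_mul_ge P K N c :
  (forall s, s < K -> c <= count (fun x => P (s * N + x)) (iota 0 N)) ->
  K * c <= count P (iota 0 (K * N)).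
Proof.
elim: K => [|K IH] h //; rewrite !ssrnat.mulSnr count_iotaD.
by apply: leq_add; [apply: IH => s hs; apply: h; lia | exact: h].
Qed.

Lemma count_iota_mul_ge_num (R : numDomainType) P K N (c : R) X :
  (forall s, s < K -> (c * X%:R <= (count (fun x => P (s * N + x)%N) (iota 0 N))%:R)%R) ->
  (c * (K * X)%:R <= (count P (iota 0 (K * N)))%:R)%R.
Proof.
elim: K => [|K IH] h; first by rewrite mul0n mulr0.
rewrite !ssrnat.mulSnr count_iotaD !natrD mulrDr.
by apply: lerD; [apply: IH => s hs; apply: h; lia | exact: h].
Qed.

Lemma count_iota_mul_ge_range P L N a K c : a + K <= L ->
  (forall s, a <= s -> s < a + K -> c <= count (fun x => P (s * N + x)) (iota 0 N)) ->
  K * c <= count P (iota 0 (L * N)).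
Proof.
move=> h1 h2; apply: leq_trans (count_iota_le _ (leq_mul h1 (leqnn N))).
rewrite mulnDl count_iotaD; apply: leq_trans (leq_addl _ _).
apply: (count_iota_mul_ge (P := fun y => P (a * N + y))) => s hs.
rewrite (eq_count (a2 := fun x => P ((a + s) * N + x))); first by apply: h2; lia.
by move=> x /=; rewrite addnA mulnDl.
Qed.

Lemma count_iota_window P lo len M : lo + len <= M ->
  count (fun y => (lo <= y) && (y < lo + len) && P y) (iota 0 M) = count P (iota lo len).
Proof.
move=> h; have -> : M = lo + (len + (M - lo - len)) by lia.
set F := fun y => _.
have outside g n : (forall x, x < n -> ~~ F (g x)) -> count (fun x => F (g x)) (iota 0 n) = 0.
  move=> hF; rewrite (eq_in_count (a2 := pred0)) ?count_pred0 // => x.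
  by rewrite mem_iota => /andP [_ /hF /negbTE].
rewrite count_iotaD (outside id lo) => [|x hx]; last by rewrite /F; lia.
rewrite count_iotaD (outside (fun x => lo + (len + x))) => [|x hx]; last by rewrite /F; lia.
rewrite addn0 (count_iota_shift P lo); apply: eq_in_count => x.
by rewrite mem_iota /F => hx /=; rewrite leq_addr ltn_add2l; case/andP: hx => _ ->.
Qed.

Lemma count_iota_mod P q lo : 0 < q ->
  count (fun y => P (y %% q)) (iota lo q) = count P (iota 0 q).
Proof.
move=> hq; elim: lo => [|lo IH].
  by apply: eq_in_count => x; rewrite mem_iota => /andP [_ hx]; rewrite modn_small.
rewrite -IH.
have e1 : count (fun y => P (y %% q)) (iota lo (1 + q)) =
  P (lo %% q) + count (fun y => P (y %% q)) (iota lo.+1 q) by [].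
have e2 : count (fun y => P (y %% q)) (iota lo (q + 1)) =
  count (fun y => P (y %% q)) (iota lo q) + P ((lo + q) %% q).
  by rewrite iotaD count_cat /= addn0.
by rewrite addnC e1 modnDr in e2; lia.
Qed.

End CountIota.

Section Circular.
Variables k l : nat -> nat.
Hypothesis k_gt0 : forall i, 0 < k i.
Hypothesis l_gt1 : forall i, 1 < l i.

Local Notation q := (q k l).
Local Notation w := (w k l).
Local Notation pinv := (pinv k l).
Local Notation jj := (jj k l).
Local Notation head_gap := (head_gap Star).
Local Notation tail_gap := (tail_gap Star).
Local Notation gaps_le := (gaps_le Star).

Definition chain m := flatten [seq w m | _ <- iota 0 (l m - 1)].
Definition padded_chain m i := nseq (q m - jj m i) Bsym ++ chain m ++ nseq (jj m i) Esym.
Definition chain_row m i := flatten [seq padded_chain m i | _ <- iota 0 (k m)].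

Lemma wSE m : w m.+1 = flatten [seq chain_row m i | i <- iota 0 (q m)].
Proof.
rewrite /= /Cop; congr flatten; apply: eq_map => i; congr flatten; apply: eq_map => j.
have const_map (s : seq nat) : [seq w m | _ <- s] = nseq (size s) (w m).
  by elim: s => //= ? s ->.
by rewrite /padded_chain /chain const_map size_iota.
Qed.

Lemma q_gt0 m : 0 < q m.
Proof. by elim: m => //= m IH; rewrite !muln_gt0 k_gt0 IH; have := l_gt1 m; lia. Qed.

Lemma q_le a b : a <= b -> q a <= q b.
Proof.
elim: b => [|b IH] h; first by have -> : a = 0 by lia.
case: (ltnP a b.+1) => h2; last by have -> : a = b.+1 by lia.
apply: (leq_trans (IH ltac:(lia))); rewrite /= expnS expn1 mulnA.
by apply: leq_pmull; rewrite !muln_gt0 q_gt0 k_gt0; have := l_gt1 b; lia.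
Qed.

Lemma pinv_lt m : pinv m < q m.
Proof.
rewrite /pinv; set s := filter _ _.
case: (ltnP 0 (size s)) => h; last by rewrite nth_default // q_gt0.
have : nth 0 s 0 \in s by apply: mem_nth.
by rewrite mem_filter mem_iota => /andP [_ /andP [_ ]].
Qed.

Lemma jj_lt m i : jj m i < q m.
Proof. by rewrite /jj ltn_pmod // q_gt0. Qed.

Lemma jj0 m : jj m 0 = 0.
Proof. by rewrite /jj muln0 mod0n. Qed.

Lemma jj_subadd m i : i.+1 < q m -> jj m i <= jj m i.+1 + jj m (q m - 1).
Proof.
move=> hi; rewrite /jj.
have -> : (pinv m * i) %% q m = ((pinv m * i.+1) %% q m + (pinv m * (q m - 1)) %% q m) %% q m.
  rewrite modnDm -mulnDr (_ : i.+1 + (q m - 1) = i + q m); last lia.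
  by rewrite mulnDr addnC modnMDl.
exact: leq_mod.
Qed.

Lemma jj_mirror_mod m i : i < q m -> (jj m i + pinv m + jj m (q m - 1 - i)) %% q m = 0.
Proof.
move=> hi; rewrite /jj -addnA modnDml addnA modnDmr.
rewrite -[X in _ + X + _]muln1 -!mulnDr (_ : i + 1 + (q m - 1 - i) = q m); last lia.
exact: modnMl.
Qed.

Lemma size_chain_w m : size (chain m) = (l m - 1) * size (w m).
Proof. exact: size_flatten_uniform. Qed.

Lemma size_padded_chain_w m i : size (w m) = q m -> size (padded_chain m i) = l m * q m.
Proof.
move=> hw; rewrite /padded_chain !size_cat !size_nseq size_chain_w hw.
have := jj_lt m i; have := l_gt1 m; move: (jj m i) (l m) (q m) => a b c' h1 h2.
have e : b * c' = (b - 1) * c' + c' by rewrite -ssrnat.mulSnr; congr (_ * _); lia.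
lia.
Qed.

Lemma size_w m : size (w m) = q m.
Proof.
elim: m => // m IH.
rewrite wSE (@size_flatten_uniform _ _ _ (k m * (l m * q m))) /=.
  by rewrite expnS expn1; lia.
move=> i _; apply: size_flatten_uniform => j _; exact: size_padded_chain_w.
Qed.

Lemma size_chain m : size (chain m) = (l m - 1) * q m.
Proof. by rewrite size_chain_w size_w. Qed.

Lemma size_padded_chain m i : size (padded_chain m i) = l m * q m.
Proof. exact/size_padded_chain_w/size_w. Qed.

Lemma size_chain_row m i : size (chain_row m i) = k m * (l m * q m).
Proof. by apply: size_flatten_uniform => j _; rewrite size_padded_chain. Qed.

Lemma size_wS m : size (w m.+1) = q m * (k m * (l m * q m)).
Proof. by rewrite size_w /= expnS expn1; lia. Qed.

Lemma star_in_w m : Star \in w m.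
Proof.
elim: m => // m IH; rewrite wSE; apply: mem_flatten_iota; first exact: q_gt0.
apply: mem_flatten_iota => //; rewrite !mem_cat; apply/orP; right; apply/orP; left.
by apply: mem_flatten_iota => //; have := l_gt1 m; lia.
Qed.

Lemma star_in_chain m : Star \in chain m.
Proof. by apply: mem_flatten_iota; [have := l_gt1 m; lia | exact: star_in_w]. Qed.

Lemma star_in_padded_chain m i : Star \in padded_chain m i.
Proof. by rewrite !mem_cat star_in_chain orbT. Qed.

Lemma star_in_chain_row m i : Star \in chain_row m i.
Proof. exact/mem_flatten_iota/star_in_padded_chain. Qed.

Lemma head_gap_chain m : head_gap (chain m) = head_gap (w m).
Proof. by rewrite head_gap_flatten //; [have := l_gt1 m; lia | exact: star_in_w]. Qed.

Lemma tail_gap_chain m : tail_gap (chain m) = tail_gap (w m).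
Proof. by rewrite tail_gap_flatten // => [|*]; [have := l_gt1 m; lia | exact: star_in_w]. Qed.

Lemma head_gap_padded_chain m i : head_gap (padded_chain m i) = q m - jj m i + head_gap (w m).
Proof. by rewrite head_gap_nseq_cat // head_gap_cat ?head_gap_chain ?star_in_chain. Qed.

Lemma tail_gap_padded_chain m i : tail_gap (padded_chain m i) = jj m i + tail_gap (w m).
Proof.
by rewrite /padded_chain tail_gap_cat ?tail_gap_cat_nseq ?tail_gap_chain // mem_cat star_in_chain.
Qed.

Lemma head_gap_chain_row m i : head_gap (chain_row m i) = q m - jj m i + head_gap (w m).
Proof. by rewrite head_gap_flatten ?star_in_padded_chain ?head_gap_padded_chain. Qed.

Lemma tail_gap_chain_row m i : tail_gap (chain_row m i) = jj m i + tail_gap (w m).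
Proof.
by rewrite tail_gap_flatten ?tail_gap_padded_chain // => *; exact: star_in_padded_chain.
Qed.

Lemma head_gap_wS m : head_gap (w m.+1) = q m + head_gap (w m).
Proof.
by rewrite wSE head_gap_flatten ?q_gt0 ?star_in_chain_row // head_gap_chain_row jj0 subn0.
Qed.

Lemma tail_gap_wS m : tail_gap (w m.+1) = jj m (q m - 1) + tail_gap (w m).
Proof.
rewrite wSE tail_gap_flatten ?q_gt0 ?tail_gap_chain_row ?subn1 // => *.
exact: star_in_chain_row.
Qed.

Lemma tail_gap_w_lt m : tail_gap (w m) < q m.
Proof. by rewrite -size_w tail_gap_lt_size // star_in_w. Qed.

Lemma head_gap_w_le n m : n <= m -> head_gap (w n) <= head_gap (w m).
Proof.
elim: m => [|m IH] h; first by have -> : n = 0 by lia.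
case: (ltnP n m.+1) => h2; last by have -> : n = m.+1 by lia.
by rewrite head_gap_wS; have := IH (ltnSE h2); lia.
Qed.

Lemma tail_gap_w_le n m : n <= m -> tail_gap (w n) <= tail_gap (w m).
Proof.
elim: m => [|m IH] h; first by have -> : n = 0 by lia.
case: (ltnP n m.+1) => h2; last by have -> : n = m.+1 by lia.
by rewrite tail_gap_wS; have := IH (ltnSE h2); lia.
Qed.

Lemma gaps_w_lt_head_gap n m : n < m -> head_gap (w n) + tail_gap (w n) < head_gap (w m).
Proof.
by move=> h; have := head_gap_w_le h; rewrite head_gap_wS; have := tail_gap_w_lt n; lia.
Qed.

(* The padding b^(q - j_i) ... e^(j_i) around every copy of w_m is what keeps the
   gaps of w_(m+1) below head_gap + tail_gap. *)
Lemma gaps_le_w m : gaps_le (w m) (head_gap (w m) + tail_gap (w m)).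
Proof.
elim: m => [|m IH].
  move=> i len /= h1 h2; case: len h1 h2 => // len h1 h2.
  by have := h2 0 isT; have -> : i = 0 by lia.
rewrite head_gap_wS tail_gap_wS; set R := q m + _ + _.
have hq := q_gt0 m.
have hchain : gaps_le (chain m) R.
  apply: gaps_le_flatten => [i hi|i hi]; last by rewrite /R; lia.
  by split; [apply: gaps_le_mono IH; rewrite /R; lia | exact: star_in_w].
have hpadded i : gaps_le (padded_chain m i) R.
  have hj := jj_lt m i.
  apply: gaps_le_cat; first by apply: gaps_le_nseq => //; rewrite /R; lia.
    apply: gaps_le_cat => //; first by apply: gaps_le_nseq => //; rewrite /R; lia.
    by rewrite tail_gap_chain head_gap_free ?nseq_free // size_nseq /R; lia.
  rewrite tail_gap_free ?nseq_free // size_nseq head_gap_cat ?star_in_chain //.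
  by rewrite head_gap_chain /R; lia.
rewrite wSE; apply: gaps_le_flatten => [i hi|i hi].
  split; last exact: star_in_chain_row.
  apply: gaps_le_flatten => [j hj|j hj]; first by split; [apply: hpadded | apply: star_in_padded_chain].
  by rewrite tail_gap_padded_chain head_gap_padded_chain /R; have := jj_lt m i; lia.
rewrite tail_gap_chain_row head_gap_chain_row /R.
by have := jj_subadd hi; have := jj_lt m i.+1; lia.
Qed.

Section Level.
Variable n : nat.
Local Notation wn := (w n).

Lemma occurs_at_padded_chain m i x : n <= m ->
  occurs_at wn (padded_chain m i) x =
  (q m - jj m i <= x) && occurs_at wn (chain m) (x - (q m - jj m i)).
Proof.
move=> hnm; rewrite (occurs_at_nseq_cat (c := Star)) ?star_in_w //; last first.
  by rewrite head_gap_cat ?star_in_chain // head_gap_chain; apply: head_gap_w_le.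
by rewrite (occurs_at_cat_nseq (c := Star)) ?star_in_w // tail_gap_chain; apply: tail_gap_w_le.
Qed.

Lemma occurs_at_wS m i j x : n <= m -> i < q m -> j < k m -> x < l m * q m ->
  occurs_at wn (w m.+1) (i * (k m * (l m * q m)) + (j * (l m * q m) + x)) =
  occurs_at wn (padded_chain m i) x.
Proof.
move=> hnm hi hj hx.
have hb := head_gap_w_le hnm; have he := tail_gap_w_le hnm.
have hrow : j * (l m * q m) + x < k m * (l m * q m).
  have : j.+1 * (l m * q m) <= k m * (l m * q m) by apply: leq_mul.
  by rewrite mulSn; lia.
rewrite wSE (occurs_at_flatten (star_in_w n) (@gaps_le_w n)) //; last 2 first.
- move=> i1 _; split; rewrite ?size_chain_row ?star_in_chain_row //.
    by rewrite head_gap_chain_row; lia.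
  by rewrite tail_gap_chain_row; lia.
- by move=> i1 i2 _ _; rewrite tail_gap_chain_row head_gap_chain_row; have := jj_lt m i2; lia.
rewrite /chain_row (occurs_at_flatten (star_in_w n) (@gaps_le_w n)) //.
- move=> i1 _; split; rewrite ?size_padded_chain ?star_in_padded_chain //.
    by rewrite head_gap_padded_chain; lia.
  by rewrite tail_gap_padded_chain; lia.
- by move=> *; rewrite tail_gap_padded_chain head_gap_padded_chain; have := jj_lt m i; lia.
Qed.

Lemma occurs_at_chain m a r : n < m -> a < l m - 1 -> r < q m ->
  occurs_at wn (chain m) (a * q m + r) = occurs_at wn (w m) r.
Proof.
move=> hnm ha hr; rewrite /chain (occurs_at_flatten (star_in_w n) (@gaps_le_w n)) //.
- move=> i _; split; rewrite ?size_w ?star_in_w //.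
    by apply: head_gap_w_le; lia.
  by apply: tail_gap_w_le; lia.
- by move=> *; have := gaps_w_lt_head_gap hnm; lia.
Qed.

Lemma occurs_at_wS_intro m i j y : i < q m -> j < k m -> occurs_at wn (chain m) y ->
  occurs_at wn (w m.+1) (i * (k m * (l m * q m)) + (j * (l m * q m) + (q m - jj m i + y))).
Proof.
move=> hi hj hy; rewrite wSE.
apply: (occurs_at_flatten_intro (N := k m * (l m * q m))) => //; first by move=> *; exact: size_chain_row.
apply: (occurs_at_flatten_intro (N := l m * q m)) => //; first by move=> *; exact: size_padded_chain.
have := occurs_at_catr wn (nseq (q m - jj m i) Bsym) (chain m ++ nseq (jj m i) Esym) y.
by rewrite size_nseq => ->; rewrite occurs_at_catl // (occurs_at_size hy).
Qed.

(* At the bottom level, w_n occurs at position y of the periodic word w_n^(l_n - 1)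
   exactly when rotating w_n by y fixes it. *)
Definition fixes_wn y :=
  all (fun t => nth Star wn ((y + t) %% q n) == nth Star wn t) (iota 0 (q n)).

Lemma fixes_wnP y :
  reflect (forall t, t < q n -> nth Star wn ((y + t) %% q n) = nth Star wn t) (fixes_wn y).
Proof.
apply: (iffP allP) => h t; first by move=> ht; apply/eqP/h; rewrite mem_iota.
by rewrite mem_iota => /andP [_ ht]; apply/eqP/h.
Qed.

Lemma fixes_wn_mod y y' : y = y' %[mod q n] -> fixes_wn y = fixes_wn y'.
Proof. by move=> h; apply: eq_in_all => t _; rewrite -modnDml h modnDml. Qed.

Lemma fixes_wn_opp x x' : fixes_wn x -> x + x' = 0 %[mod q n] -> fixes_wn x'.
Proof.
move=> /fixes_wnP h hx; apply/fixes_wnP => t ht.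
have ht' : (x' + t) %% q n < q n by rewrite ltn_pmod ?q_gt0.
rewrite -(h _ ht'); congr nth.
by rewrite modnDmr addnA -modnDml hx mod0n add0n modn_small.
Qed.

Lemma occurs_at_chain_base y :
  occurs_at wn (chain n) y = (y + q n <= (l n - 1) * q n) && fixes_wn y.
Proof.
apply/(occurs_atP Star)/andP => [[h1 h2]|[h1 /fixes_wnP h2]];
  rewrite size_w size_chain in h1 *; split => //.
  apply/fixes_wnP => t ht; rewrite -(h2 t) ?size_w //.
  by rewrite /chain nth_flatten_const size_w //; lia.
by move=> t ht; rewrite /chain nth_flatten_const size_w ?h2 //; lia.
Qed.

Definition occ_count X := count (occurs_at wn X) (iota 0 (size X)).
Definition mirror_count X C :=
  count (fun d => occurs_at wn X d && occurs_at wn X (C - d)) (iota 0 (size X)).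

Definition pinv_sum m := \sum_(n <= i < m) pinv i.

Definition axis m := q m - q n + pinv_sum m.

Definition chain_mirror m y := (l m - 1) * q m - q n + pinv_sum m - y.
Definition lined_in_chain m z y :=
  (q m <= chain_mirror m y + z) && occurs_at wn (chain m) (chain_mirror m y + z - q m).
Definition lined_count m z :=
  count (fun y => occurs_at wn (chain m) y && lined_in_chain m z y) (iota 0 ((l m - 1) * q m)).

(* The reflection of level [m+1] maps position [y] of the chain of row [i] to
   [chain_mirror m y + pad_sum m i - q m]; by [jj_mirror_mod], [pad_sum m i] is
   [0], [q m] or [2 q m]. *)
Definition pad_sum m i := jj m i + pinv m + jj m (q m - 1 - i).

Lemma pinv_sum_le m : m <= n -> pinv_sum m = 0.
Proof. by move=> h; rewrite /pinv_sum big_geq. Qed.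

Lemma pinv_sumS m : n <= m -> pinv_sum m.+1 = pinv_sum m + pinv m.
Proof. by move=> h; rewrite /pinv_sum big_nat_recr. Qed.

Lemma pad_sum_div_le m i : i < q m -> pad_sum m i %/ q m <= 2.
Proof.
move=> hi; rewrite -ltnS ltn_divLR ?q_gt0 // /pad_sum.
by have := jj_lt m i; have := jj_lt m (q m - 1 - i); have := pinv_lt m; lia.
Qed.

Lemma pad_sumE m i : i < q m -> pad_sum m i = pad_sum m i %/ q m * q m.
Proof. by move=> hi; rewrite {1}(divn_eq (pad_sum m i) (q m)) jj_mirror_mod ?addn0. Qed.

Lemma l_mul_q m : l m * q m = (l m - 1) * q m + q m.
Proof. by rewrite -ssrnat.mulSnr; congr (_ * _); have := l_gt1 m; lia. Qed.

Lemma count_padded_chain_ge m i (g : pred nat) : n <= m ->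
  count (fun y => occurs_at wn (chain m) y && g (q m - jj m i + y)) (iota 0 ((l m - 1) * q m)) <=
  count (fun x => occurs_at wn (padded_chain m i) x && g x) (iota 0 (l m * q m)).
Proof.
move=> hnm; set a := q m - jj m i.
have ha : a <= l m * q m by rewrite l_mul_q /a; nia.
rewrite -(subnKC ha) count_iotaD; apply: leq_trans (leq_addl _ _).
have hr : (l m - 1) * q m <= l m * q m - a by rewrite l_mul_q /a; have := jj_lt m i; nia.
apply: leq_trans (count_iota_le _ hr); apply: sub_in_count => y _ /andP [h1 h2].
by rewrite occurs_at_padded_chain // -/a leq_addr addKn h1.
Qed.

Lemma occ_count_padded_chain m i : n <= m ->
  count (occurs_at wn (padded_chain m i)) (iota 0 (l m * q m)) = occ_count (chain m).
Proof.
move=> hnm; set a := q m - jj m i.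
have ha : a <= l m * q m by rewrite l_mul_q /a; nia.
rewrite -(subnKC ha) count_iotaD.
rewrite (eq_in_count (a1 := occurs_at wn (padded_chain m i)) (a2 := pred0)) => [|x]; last first.
  by rewrite mem_iota occurs_at_padded_chain // => /andP [_ hx] /=; rewrite leqNgt hx.
rewrite count_pred0 add0n (eq_count (a2 := occurs_at wn (chain m))) => [|y]; last first.
  by rewrite /= occurs_at_padded_chain // -/a leq_addr addKn.
rewrite /occ_count size_chain (count_iota_trunc (n := (l m - 1) * q m)) //.
  by rewrite l_mul_q /a; have := jj_lt m i; nia.
by move=> x hx _; apply: occurs_at_out; rewrite size_chain size_w; have := q_gt0 n; nia.
Qed.

Lemma occ_count_wS m : n <= m -> occ_count (w m.+1) = q m * (k m * occ_count (chain m)).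
Proof.
move=> hnm; rewrite {1}/occ_count size_wS; apply: count_iota_mul => i hi.
apply: count_iota_mul => j hj; rewrite -(occ_count_padded_chain i hnm).
by apply: eq_in_count => x; rewrite mem_iota => /andP [_ hx] /=; rewrite occurs_at_wS.
Qed.

(* The reflection about [axis m.+1] sends row i, copy j of w_(m+1) to row q_m - 1 - i,
   copy k_m - 1 - j, shifting positions inside the chain by [pad_sum m i]. *)
Lemma mirror_occurs_at_wS m i j y : n <= m -> i < q m -> j < k m ->
  occurs_at wn (chain m) y -> lined_in_chain m (pad_sum m i) y ->
  occurs_at wn (w m.+1)
    (axis m.+1 - (i * (k m * (l m * q m)) + (j * (l m * q m) + (q m - jj m i + y)))).
Proof.
move=> hnm hi hj hy /andP [hg1 hg2].
have hy' := occurs_at_size hy; rewrite size_chain size_w in hy'.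
have hsplit a b c : b < a -> (a - 1 - b) * c + b * c + c = a * c.
  by move=> h; rewrite -!mulnDl -[X in _ + X]mul1n -mulnDl; congr (_ * _); lia.
have e1 := hsplit _ _ (k m * (l m * q m)) hi; have e2 := hsplit _ _ (l m * q m) hj.
have hN := l_mul_q m; have hJ1 := jj_lt m i; have hJ2 := jj_lt m (q m - 1 - i).
have hp := pinv_lt m.
have hC : axis m.+1 = q m * (k m * (l m * q m)) - q n + pinv_sum m + pinv m.
  by rewrite /axis pinv_sumS // -(size_w m.+1) size_wS; lia.
move: hg1 hg2; rewrite /chain_mirror /pad_sum => hg1 hg2.
have -> : axis m.+1 - (i * (k m * (l m * q m)) + (j * (l m * q m) + (q m - jj m i + y))) =
   (q m - 1 - i) * (k m * (l m * q m)) + ((k m - 1 - j) * (l m * q m) +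
     (q m - jj m (q m - 1 - i) + ((l m - 1) * q m - q n + pinv_sum m - y +
       (jj m i + pinv m + jj m (q m - 1 - i)) - q m))).
  rewrite hC; move: e1 e2 hN hy' hg1 hJ1 hJ2 hp.
  move: (jj m i) (jj m (q m - 1 - i)) (pinv m) (pinv_sum m) (q n) => a1 a2 p0 d0 qn.
  move: ((q m - 1 - i) * _) (i * _) (q m * _) => A2 A1 A3.
  move: ((k m - 1 - j) * (l m * q m)) (j * (l m * q m)) (k m * (l m * q m)) => B2 B1 KN.
  move: (l m * q m) ((l m - 1) * q m) => N L.
  lia.
by apply: occurs_at_wS_intro => //; [lia | have := k_gt0 m; lia].
Qed.

Lemma mirror_count_wS_ge m (c : rat) : n <= m ->
  (forall i, i < q m -> (c * (occ_count (chain m))%:R <= (lined_count m (pad_sum m i))%:R)%R) ->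
  (c * (occ_count (w m.+1))%:R <= (mirror_count (w m.+1) (axis m.+1))%:R)%R.
Proof.
move=> hnm h; rewrite occ_count_wS // /mirror_count size_wS.
apply: count_iota_mul_ge_num => i hi; apply: count_iota_mul_ge_num => j hj.
apply: (le_trans (h i hi)); rewrite ler_nat.
set g := fun x => occurs_at wn (w m.+1)
  (axis m.+1 - (i * (k m * (l m * q m)) + (j * (l m * q m) + x))).
apply: (@leq_trans (count (fun y => occurs_at wn (chain m) y && g (q m - jj m i + y))
                          (iota 0 ((l m - 1) * q m)))).
  by apply: sub_in_count => y _ /andP [h1 h2]; rewrite h1 /=; exact: mirror_occurs_at_wS.
apply: (leq_trans (count_padded_chain_ge i g hnm)).
apply: sub_in_count => x; rewrite mem_iota => /andP [_ hx] /andP [h1 h2].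
by rewrite /= occurs_at_wS // h1.
Qed.

Lemma occ_count_chain m : n < m -> occ_count (chain m) = (l m - 1) * occ_count (w m).
Proof.
move=> hnm; rewrite {1}/occ_count size_chain (count_iota_mul (c := occ_count (w m))) // => s hs.
rewrite /occ_count size_w; apply: eq_in_count => x; rewrite mem_iota => /andP [_ hx].
by rewrite /= occurs_at_chain.
Qed.

Lemma lined_in_chain_copy m z a s r : n < m -> a < l m - 1 ->
  (a + s + 2) * q m = (l m - 1) * q m + z -> z <= a * q m + q m ->
  occurs_at wn (w m) r -> occurs_at wn (w m) (axis m - r) ->
  lined_in_chain m z (s * q m + r).
Proof.
move=> hnm ha e hz hr hmr; have hqn := q_gt0 n.
have := occurs_at_size hr; have := occurs_at_size hmr; rewrite !size_w /axis => b1 b2.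
have {}e : a * q m + s * q m + 2 * q m = (l m - 1) * q m + z by rewrite -!mulnDl.
have hmirror : chain_mirror m (s * q m + r) + z - q m = a * q m + (axis m - r).
  by rewrite /chain_mirror /axis; lia.
rewrite /lined_in_chain hmirror occurs_at_chain ?hmr ?andbT //; last by rewrite /axis; lia.
by move: hmirror; rewrite /chain_mirror /axis; lia.
Qed.

Lemma lined_count_ge m t : n < m -> t <= 2 -> 3 <= l m ->
  (l m - 2) * mirror_count (w m) (axis m) <= lined_count m (t * q m).
Proof.
move=> hnm ht hl3; rewrite /lined_count.
apply: (@count_iota_mul_ge_range _ _ _ (t == 2) (l m - 2)); first by case: (t == 2); lia.
move=> s h1 h2.
rewrite /mirror_count size_w.
apply: sub_in_count => r; rewrite mem_iota => /andP [_ hr] /andP [o1 o2].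
rewrite occurs_at_chain ?o1 //=; last by case: (t == 2) h2; lia.
apply: (@lined_in_chain_copy _ _ (l m + t - 3 - s)) => //; first by move: h1 h2; case: eqP; lia.
  by rewrite -mulnDl; congr (_ * _); move: h1 h2; case: eqP; lia.
rewrite -{3}[q m]mul1n -mulnDl leq_mul2r; apply/orP; right; move: h1 h2; case: eqP; lia.
Qed.

Lemma lined_in_chain_base z y : 3 <= l n -> occurs_at wn (chain n) y -> z = 0 %[mod q n] ->
  q n <= chain_mirror n y + z <= (l n - 1) * q n -> lined_in_chain n z y.
Proof.
move=> hl3 hy hz /andP [h1 h2]; rewrite /lined_in_chain h1 /= occurs_at_chain_base.
move: hy; rewrite occurs_at_chain_base => /andP [hy1 hy2].
apply/andP; split; first lia.
apply: (fixes_wn_opp hy2).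
have e : (l n - 1) * q n = (l n - 3) * q n + 2 * q n by rewrite -mulnDl; congr (_ * _); lia.
have -> : y + (chain_mirror n y + z - q n) = (l n - 3) * q n + z.
  by move: h1; rewrite /chain_mirror pinv_sum_le //; lia.
by rewrite modnMDl.
Qed.

(* An occurrence that is not lined up lies in a single window of length q_n, at the
   end of the chain when z = 0 and at its start when z = 2 q_n. *)
Lemma count_unlined_base t : t <= 2 -> 3 <= l n ->
  count (fun y => occurs_at wn (chain n) y && ~~ lined_in_chain n (t * q n) y)
        (iota 0 ((l n - 1) * q n))
  <= count fixes_wn (iota 0 (q n)).
Proof.
move=> ht hl3; have hq := q_gt0 n; have ht3 : t = 0 \/ t = 1 \/ t = 2 by lia.
have hLQ : 2 * q n <= (l n - 1) * q n by rewrite leq_mul2r; lia.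
set lo := (t == 0) * ((l n - 1) * q n - 2 * q n + 1).
apply: (@leq_trans (count (fun y => (lo <= y) && (y < lo + q n) && fixes_wn y)
                          (iota 0 ((l n - 1) * q n)))).
  apply: sub_in_count => y _ /andP [hy hnl].
  move: (hy); rewrite occurs_at_chain_base => /andP [hy1 ->]; rewrite andbT.
  apply: contraNT hnl => hout; apply: lined_in_chain_base => //; first by rewrite modnMl mod0n.
  move: hout; rewrite /chain_mirror pinv_sum_le // /lo.
  by case: ht3 => [->|[->|->]]; lia.
rewrite count_iota_window; last by rewrite /lo; case: eqP; lia.
rewrite -(count_iota_mod _ lo hq); apply/eq_leq/eq_count => y.
by apply: fixes_wn_mod; rewrite modn_mod.
Qed.

Lemma occ_count_chain_base_le t : t <= 2 -> 3 <= l n ->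
  occ_count (chain n) <= lined_count n (t * q n) + count fixes_wn (iota 0 (q n)).
Proof.
move=> ht hl3; rewrite /occ_count size_chain -size_filter.
rewrite -(count_predC (lined_in_chain n (t * q n))) !count_filter.
apply: leq_add; first by apply/eq_leq/eq_count => y; rewrite /= andbC.
by apply: leq_trans (count_unlined_base ht hl3); apply/eq_leq/eq_count => y; rewrite /= andbC.
Qed.

Lemma occ_count_chain_base_ge : 3 <= l n ->
  (l n - 2) * count fixes_wn (iota 0 (q n)) <= occ_count (chain n).
Proof.
move=> hl3; rewrite /occ_count size_chain.
apply: (@count_iota_mul_ge_range _ _ _ 0 (l n - 2)) => [|s _ hs]; first lia.
apply/eq_leq/eq_in_count => x; rewrite mem_iota => /andP [_ hx].
have hrange : s * q n + x + q n <= (l n - 1) * q n.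
  have : s.+2 * q n <= (l n - 1) * q n by apply: leq_mul => //; lia.
  by rewrite !mulSn; lia.
by rewrite /= occurs_at_chain_base hrange; apply: fixes_wn_mod; rewrite modnMDl.
Qed.

Definition level_ratio i : rat := (1 - 2 / ((l i)%:R - 1))%R.

Lemma level_ratioE i : 3 <= l i -> level_ratio i = ((l i - 3)%:R / (l i - 1)%:R)%R.
Proof.
move=> h; have hne : ((l i - 1)%:R : rat) != 0%R by rewrite pnatr_eq0; lia.
by move: hne; rewrite /level_ratio !natrB; try lia; move=> hne; field.
Qed.

Lemma level_ratio_ge0 i : 3 <= l i -> (0 <= level_ratio i)%R.
Proof. by move=> h; rewrite level_ratioE // divr_ge0. Qed.

Lemma level_ratio_mul_le i X Y : 3 <= l i -> (l i - 3) * X <= (l i - 1) * Y ->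
  (level_ratio i * X%:R <= Y%:R)%R.
Proof.
move=> h1 h2; rewrite level_ratioE // mulrAC ler_pdivrMr; last by rewrite ltr0n; lia.
by rewrite -!natrM ler_nat [X in _ <= X]mulnC.
Qed.

Lemma mirror_count_base : 3 <= l n ->
  (level_ratio n * (occ_count (w n.+1))%:R <= (mirror_count (w n.+1) (axis n.+1))%:R)%R.
Proof.
move=> hl3; apply: mirror_count_wS_ge => // i hi.
apply: level_ratio_mul_le => //; rewrite (pad_sumE hi).
have := occ_count_chain_base_le (pad_sum_div_le hi) hl3.
have := occ_count_chain_base_ge hl3.
move: (occ_count _) (lined_count _ _) (count _ _) => o g f hf ho.
have h1 : (l n - 1) * o <= (l n - 1) * g + (l n - 1) * f by rewrite -mulnDr leq_mul2l ho orbT.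
have h2 : (l n - 1) * f <= 2 * ((l n - 2) * f) by rewrite mulnA leq_mul2r; apply/orP; right; lia.
have h3 : (l n - 3) * o + 2 * o = (l n - 1) * o by rewrite -mulnDl; congr (_ * _); lia.
lia.
Qed.

Lemma mirror_count_step m (c : rat) : n < m -> 3 <= l m -> (0 <= c)%R ->
  (c * (occ_count (w m))%:R <= (mirror_count (w m) (axis m))%:R)%R ->
  (c * level_ratio m * (occ_count (w m.+1))%:R <= (mirror_count (w m.+1) (axis m.+1))%:R)%R.
Proof.
move=> hnm hl3 hc ih; apply: (mirror_count_wS_ge (ltnW hnm)) => i hi.
rewrite occ_count_chain //.
have -> : (c * level_ratio m * ((l m - 1) * occ_count (w m))%:R =
          (l m - 3)%:R * (c * (occ_count (w m))%:R))%R.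
  have hne : ((l m - 1)%:R : rat) != 0%R by rewrite pnatr_eq0; lia.
  by move: hne; rewrite level_ratioE // natrM => hne; field.
apply: (le_trans (ler_wpM2l (ler0n _ _) ih)); rewrite -natrM ler_nat (pad_sumE hi).
apply: leq_trans _ (lined_count_ge hnm (pad_sum_div_le hi) hl3).
by apply: leq_mul => //; lia.
Qed.

Lemma mirror_count_ge m : n < m -> (forall i, n <= i < m -> 3 <= l i) ->
  ((\prod_(n <= i < m) level_ratio i) * (occ_count (w m))%:R
    <= (mirror_count (w m) (axis m))%:R)%R.
Proof.
elim: m => // m IH hnm hl3.
case: (ltnP n m) => [hm|hmn]; last first.
  have -> : m = n by lia.
  by rewrite big_nat1; apply: mirror_count_base; apply: hl3; lia.
rewrite big_nat_recr /=; last lia.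
apply: mirror_count_step => //; first by apply: hl3; lia.
  rewrite big_seq; apply: prodr_ge0 => i; rewrite mem_index_iota => hi.
  by apply: level_ratio_ge0; apply: hl3; lia.
by apply: IH => // i hi; apply: hl3; lia.
Qed.

Lemma A_pinv_sum m : n <= m -> A k l m = (A k l n - (pinv_sum m)%:Z)%R.
Proof.
elim: m => [|m IH] h; first by move: h; rewrite leqn0 => /eqP ->; rewrite pinv_sum_le ?subr0.
case: (ltnP n m.+1) => hm; last first.
  have <- : n = m.+1 by lia.
  by rewrite pinv_sum_le // subr0.
by rewrite /= IH // pinv_sumS // PoszD opprD addrA.
Qed.

End Level.
End Circular.

Section Windows.
Variable s : int -> sym.

Lemma window_drop a d len L : d + len <= L ->
  window s (a + d%:Z) len = take len (drop d (window s a L)).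
Proof.
move=> h; apply: (@eq_from_nth _ Star) => [|i]; rewrite size_mkseq.
  by rewrite size_takel // size_drop size_mkseq; lia.
by move=> hi; rewrite nth_take // nth_drop !nth_mkseq ?PoszD ?addrA //; lia.
Qed.

Lemma window_eq_occurs_at a d u X : window s a (size X) = X -> d + size u <= size X ->
  (window s (a + d%:Z) (size u) == u) = occurs_at u X d.
Proof. by move=> hX h; rewrite /occurs_at h (window_drop _ h) hX. Qed.

Lemma window_shpow_revs t a len :
  window (shpow t (revs s)) a len = rev (window s (- a - t - len%:Z + 1) len).
Proof.
apply: (@eq_from_nth _ Star) => [|i]; rewrite size_mkseq ?size_rev ?size_mkseq // => hi.
rewrite nth_rev ?size_mkseq // !nth_mkseq /shpow /revs; try lia.
by congr s; lia.
Qed.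

End Windows.

Section PrincipalBlock.
Variables (k l : nat -> nat) (n m rm : nat) (s : int -> sym).
Hypothesis k_gt0 : forall i, 0 < k i.
Hypothesis l_gt1 : forall i, 1 < l i.
Hypothesis le_nm : n <= m.
Hypothesis principal : window s (- rm%:Z) (q k l m) = w k l m.

Local Notation q := (q k l).
Local Notation w := (w k l).

Let le_q : q n <= q m := q_le k_gt0 l_gt1 le_nm.

Let principal_size : window s (- rm%:Z) (size (w m)) = w m.
Proof. by rewrite size_w. Qed.

Let occurs_at_principal d : d <= q m - q n ->
  (window s (- rm%:Z + d%:Z) (q n) == w n) = occurs_at (w n) (w m) d.
Proof.
move=> hd; have := le_q.
by rewrite -(size_w k_gt0 l_gt1 n) (window_eq_occurs_at principal_size) // !size_w //; lia.
Qed.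

Let count_principal (P : pred nat) :
  (forall d, q m - q n < d -> P d -> occurs_at (w n) (w m) d) ->
  count P (iota 0 (size (w m))) = count P (iota 0 (q m - q n).+1).
Proof.
move=> hP; have := le_q; have := q_gt0 k_gt0 l_gt1 n; rewrite size_w // => hq0 hq.
apply: count_iota_trunc => [|d hd _]; first lia.
apply/negP => /(hP _ hd) /occurs_at_size; rewrite !size_w //; lia.
Qed.

Lemma size_principal_blocks :
  size [seq d <- iota 0 (q m - q n).+1 | window s (- rm%:Z + d%:Z) (q n) == w n] =
  occ_count k l n (w m).
Proof.
rewrite size_filter /occ_count count_principal //.
by apply: eq_in_count => d; rewrite mem_iota => /andP [_ hd]; apply: occurs_at_principal.
Qed.

Lemma mirror_count_le_lined :
  mirror_count k l n (w m) (axis k l n m) <=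
  size [seq d <- [seq d <- iota 0 (q m - q n).+1 | window s (- rm%:Z + d%:Z) (q n) == w n]
       | window (shpow (2 * rm%:Z - ((q m)%:Z - 1) + A k l m - A k l n)%R (revs s))
                (- rm%:Z + d%:Z) (q n) == rev (w n)].
Proof.
rewrite size_filter count_filter /mirror_count count_principal => [|d _ /andP []] //.
apply: sub_in_count => d; rewrite mem_iota => /andP [_ hd] /andP [o1 o2] /=.
rewrite occurs_at_principal ?o1 ?andbT; last lia.
have := occurs_at_size o2; rewrite !size_w // /axis => b2.
rewrite window_shpow_revs (inj_eq (can_inj revK)) -(size_w k_gt0 l_gt1 n).
rewrite (A_pinv_sum k l le_nm); set a := (X in window s X _).
have -> : a = (- rm%:Z + (axis k l n m - d)%:Z)%R by rewrite /a /axis size_w //; lia.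
by rewrite (window_eq_occurs_at principal_size) // !size_w // /axis; lia.
Qed.

End PrincipalBlock.

Lemma prod_level_ratio_le0 (l : nat -> nat) n m : n < m -> l n = 2 ->
  (forall i, n < i -> 3 <= l i) -> (\prod_(n <= i < m) level_ratio l i <= 0)%R.
Proof.
move=> hnm hl2 hl3; rewrite big_ltn // {1}/level_ratio hl2.
have -> : (1 - 2 / (2%:R - 1) = -1 :> rat)%R by [].
rewrite mulN1r oppr_le0 big_seq; apply: prodr_ge0 => i.
by rewrite mem_index_iota => hi; apply: level_ratio_ge0; apply: hl3; lia.
Qed.

Theorem mainTheorem10
  (k l : nat -> nat)
  (hk : forall i, (2 <= k i)%N)
  (hl : forall i, (2 <= l i)%N)
  (hlinc : forall i, (l i < l i.+1)%N)
  (hsum : exists B : rat, forall N, (\sum_(i < N) ((l i)%:R)^-1 <= B)%R)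
  (n m : nat) (hnm : (n < m)%N)
  (s : int -> sym) (hs : inK k l s)
  (rm : nat) (hprin : principal_block k l s m rm) :
  let s' := shpow (2 * rm%:Z - ((q k l m)%:Z - 1) + A k l m - A k l n)%R (revs s) in
  (* n-blocks of s inside the principal m-block [-rm, q_m - rm):
     intervals [-rm + d, -rm + d + q_n) with d <= q_m - q_n carrying w_n *)
  let blocks := [seq d <- iota 0 (q k l m - q k l n).+1
                 | window s (- rm%:Z + d%:Z)%R (q k l n) == w k l n] in
  (* those lined up with an occurrence of the reversed n-word in s' *)
  let lined := [seq d <- blocks
                 | window s' (- rm%:Z + d%:Z)%R (q k l n) == rev (w k l n)] in
  ((\prod_(n <= i < m) (1 - 2 / ((l i)%:R - 1)) : rat) * (size blocks)%:R
     <= (size lined)%:R)%R.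
Proof.
cbv zeta.
have k_gt0 i : 0 < k i by have := hk i; lia.
have l_gt1 i : 1 < l i by have := hl i; lia.
have l_ge3 i : n < i -> 3 <= l i.
  by move=> hi; have := homo_ltn ltn_trans hlinc hi; have := hl n; lia.
case: hprin => _ principal.
rewrite size_principal_blocks //; last exact: ltnW.
apply: (@le_trans _ _ ((mirror_count k l n (w k l m) (axis k l n m))%:R)%R); last first.
  by rewrite ler_nat; apply: mirror_count_le_lined => //; exact: ltnW.
have [hl3|hl2] := leqP 3 (l n).
  apply: mirror_count_ge => // i /andP [hi _].
  by case: (ltngtP n i) hi => // [/l_ge3 | <-].
apply: (le_trans (y := 0%R)) => //; apply: mulr_le0_ge0 => //.
by apply: prod_level_ratio_le0 => //; have := hl n; lia.
Qed.
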